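(* Let $W$ be a nonnegative, integer-valued random variable with $p=\mathbb{P}(W=0)$. Let $N\sim\mathrm{Geom}(p)$ and suppose that either $W\leq_{hr}N$ or $N\leq_{hr}W$. Then $$d_{TV}(\mathcal{L}(W),\mathcal{L}(N))\leq\left|1-p(1+\mathbb{E}W)\right|.$$
   Context: $N\sim\mathrm{Geom}(p)$ means $\mathbb{P}(N=k)=p(1-p)^k$, $k\ge0$. For nonnegative integer-valued $T$, $r_T(j)=\mathbb{P}(T=j)/\mathbb{P}(T>j)$; $T\leq_{hr}U$ (hazard rate order) means $r_T(j)\geq r_U(j)$ for all $j$. $d_{TV}(\mathcal{L}(U),\mathcal{L}(V))=\sup_{A\subseteq\{0,1,2,\ldots\}}|\mathbb{P}(U\in A)-\mathbb{P}(V\in A)|$. *)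

(* Random variables with values in {0,1,2,...}
   are represented by their laws: probability mass functions on nat. *)
From HB Require Import structures.
From mathcomp Require Import all_boot all_order all_algebra.
From mathcomp Require Import all_classical all_reals ereal esum.
Set Implicit Arguments. Unset Strict Implicit. Unset Printing Implicit Defensive.
Import Order.TTheory GRing.Theory Num.Theory.
Local Open Scope classical_set_scope.
Local Open Scope ring_scope.

Section Defs.
Variable R : realType.

Definition is_pmf (q : nat -> R) : Prop :=
  (forall k, 0 <= q k) /\ (\esum_(k in [set: nat]) (q k)%:E = 1)%E.

Definition prob (q : nat -> R) (A : set nat) : \bar R :=
  \esum_(k in A) (q k)%:E.

Definition tail (q : nat -> R) (j : nat) : \bar R :=
  prob q [set k | (j < k)%N].

Definition hazard (q : nat -> R) (j : nat) : \bar R :=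
  if tail q j == 0%E then +oo%E else ((q j) / fine (tail q j))%:E.

Definition hr_le (qT qU : nat -> R) : Prop :=
  forall j : nat, (hazard qU j <= hazard qT j)%E.

Definition geom_pmf (p : R) : nat -> R := fun k => p * (1 - p) ^+ k.

Definition expect (q : nat -> R) : \bar R :=
  \esum_(k in [set: nat]) (k%:R * q k)%:E.

Definition dTV (q1 q2 : nat -> R) : \bar R :=
  ereal_sup [set `|(prob q1 A - prob q2 A)%E|%E | A in [set: set nat]].

End Defs.

From HB Require Import structures.
From mathcomp Require Import all_boot all_order all_algebra.
From mathcomp Require Import all_classical all_reals ereal esum normedtype sequences.
From mathcomp Require Import ring lra.
Import Order.TTheory GRing.Theory Num.Theory.
Local Open Scope classical_set_scope.
Local Open Scope ring_scope.

(* Let S(j) = P(W >= j), so that 1 + E W = sum_j S(j), and recall that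
   P(N >= j) = (1 - p)^j.  Comparing the hazard rates with the constant
   hazard rate p / (1 - p) of Geom(p) gives P(W = j) >= p S(j) for every j
   when W <=_hr N (and <= when N <=_hr W); by induction on j this yields
   S(j) <= (1 - p)^j (resp. >=).  Hence y_j = p S(j) is a common lower bound
   (resp. upper bound) of P(W = j) and P(N = j).  For two laws f, g with such
   a common bound, f <= g + |g - y| or g <= f + |g - y| pointwise, so
   d_TV(f, g) <= sum_j |g_j - y_j| = |1 - sum_j y_j|, and here
   sum_j y_j = p (1 + E W). *)

Section pmf_nat.
Context {R : realType}.
Implicit Types (p : R) (q : nat -> R) (A : set nat).

Lemma abseBC (x y : \bar R) : `|x - y|%E = `|y - x|%E.
Proof. by case: x y => [x||] [y||] //=; rewrite distrC. Qed.

Lemma esum_ltn (f : nat -> R) n : (forall k, 0 <= f k) ->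
  (\esum_(k in `I_n) (f k)%:E = (\sum_(k < n) f k)%:E)%E.
Proof.
move=> f0; rewrite esum_fset ?finite_II // => [|k _]; last by rewrite lee_fin.
by rewrite -fsbig_ord sumEFin.
Qed.

Lemma esumZl (x : R) (f : nat -> R) : 0 <= x -> (forall k, 0 <= f k) ->
  (x%:E * (\esum_(k in [set: nat]) (f k)%:E) =
   \esum_(k in [set: nat]) (x * f k)%:E)%E.
Proof.
move=> x0 f0; rewrite -!nneseries_esumT => [|k|k]; rewrite ?lee_fin ?mulr_ge0 //.
by rewrite -nneseriesZl // => k _; rewrite lee_fin.
Qed.

Lemma prob_setC q A : is_pmf q -> (prob q A + prob q (~` A) = 1)%E.
Proof.
case=> q0 <-; rewrite [in RHS](esumID A) => [|k _]; last by rewrite lee_fin.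
by rewrite !setTI.
Qed.

Lemma prob_ge0 q A : is_pmf q -> (0 <= prob q A)%E.
Proof. by move=> Hq; apply: esum_ge0 => k _; rewrite lee_fin Hq.1. Qed.

Lemma prob_le1 q A : is_pmf q -> (prob q A <= 1)%E.
Proof. by move=> Hq; rewrite -(prob_setC q A Hq) leeDl // prob_ge0. Qed.

Lemma prob_fin_num q A : is_pmf q -> prob q A \is a fin_num.
Proof.
move=> Hq; rewrite ge0_fin_numE ?prob_ge0 //.
exact: le_lt_trans (prob_le1 q A Hq) (ltry 1).
Qed.

Lemma pmf_le1 q k : is_pmf q -> q k <= 1.
Proof.
move=> Hq; rewrite -lee_fin -(esum_set1 (a := fun k => (q k)%:E)) ?lee_fin ?Hq.1 //.
exact: prob_le1.
Qed.

Lemma prob_setCE q A : is_pmf q -> prob q (~` A) = (1 - fine (prob q A))%:E.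
Proof.
move=> Hq; have := prob_setC q A Hq.
rewrite -(fineK (prob_fin_num q A Hq)) -(fineK (prob_fin_num q (~` A) Hq)).
rewrite -EFinD => -[<-].
by rewrite addrAC subrr add0r.
Qed.

(* [surv q j] is P(T >= j); the strict tail P(T > j) of the definitions is
   [surv q j.+1]. *)
Definition surv q j : R := 1 - \sum_(k < j) q k.

Lemma survS q j : surv q j = q j + surv q j.+1.
Proof. by rewrite /surv big_ord_recr /=; ring. Qed.

Lemma setC_ltn n : ~` `I_n = [set k | (n <= k)%N].
Proof.
by apply/seteqP; split => k /=; rewrite ltnNge; [move/negP/negbNE | move=> ->].
Qed.

Lemma prob_geqE q j : is_pmf q -> prob q [set k | (j <= k)%N] = (surv q j)%:E.
Proof. by move=> Hq; rewrite -setC_ltn prob_setCE // /prob esum_ltn //; case: Hq. Qed.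

Lemma surv_ge0 q j : is_pmf q -> 0 <= surv q j.
Proof. by move=> Hq; rewrite -lee_fin -prob_geqE // prob_ge0. Qed.

Lemma hazardE q j : is_pmf q ->
  hazard q j = if surv q j.+1 == 0 then +oo%E else (q j / surv q j.+1)%:E.
Proof. by move=> Hq; rewrite /hazard /tail prob_geqE // eqe. Qed.

Lemma surv_geom p j : surv (geom_pmf p) j = (1 - p) ^+ j.
Proof.
elim: j => [|j IH]; first by rewrite /surv big_ord0 subr0 expr0.
by have := survS (geom_pmf p) j; rewrite IH /geom_pmf exprS; lra.
Qed.

Lemma geom_pmf_ge0 p k : 0 <= p <= 1 -> 0 <= geom_pmf p k.
Proof. by case/andP=> p0 p1; rewrite mulr_ge0 ?exprn_ge0 ?subr_ge0. Qed.

Lemma is_pmf_geom p : 0 < p <= 1 -> is_pmf (geom_pmf p).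
Proof.
case/andP=> p0 p1; have g0 k : 0 <= geom_pmf p k by rewrite geom_pmf_ge0 // ltW // p1.
split => //; rewrite -nneseries_esumT => [|k]; last by rewrite lee_fin.
apply: cvg_lim => //; apply: cvg_EFin; first by apply: nearW => n; rewrite sumEFin.
rewrite (_ : _ \o _ = series (geometric p (1 - p))); last first.
  by apply/funext => n /=; rewrite sumEFin.
have lt1 : `|1 - p| < 1 by rewrite ger0_norm ?subr_ge0 //; lra.
by have := @cvg_geometric_series _ p _ lt1; rewrite subKr divff ?gt_eqF.
Qed.

Lemma hazard_geom p j : 0 < p <= 1 ->
  hazard (geom_pmf p) j = if p == 1 then +oo%E else (p / (1 - p))%:E.
Proof.
move=> p01; rewrite hazardE; last exact: is_pmf_geom.
rewrite surv_geom expf_eq0 /= subr_eq0 eq_sym.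
case: eqP => // /eqP p_neq1; congr (_%:E).
by rewrite /geom_pmf exprS invfM mulrACA divff ?mulr1 // expf_neq0 // subr_eq0 eq_sym.
Qed.

Lemma hr_le_geom_surv q p : is_pmf q -> 0 < p <= 1 -> hr_le q (geom_pmf p) ->
  forall j, p * surv q j <= q j.
Proof.
move=> Hq p01 hr j; have := hr j; rewrite hazard_geom // hazardE // (survS q j).
have /andP[p0 p1] := p01; have q0 := Hq.1 j; have s0 := surv_ge0 q j.+1 Hq.
have [->|s_neq0] := eqVneq (surv q j.+1) 0; first by rewrite addr0 => _; nra.
have [->|p_neq1] := eqVneq p 1; first by rewrite leye_eq.
have s_gt0 : 0 < surv q j.+1 by rewrite lt_neqAle eq_sym s_neq0.
have p_lt1 : 0 < 1 - p by rewrite subr_gt0 lt_neqAle p_neq1.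
by rewrite lee_fin ler_pdivlMr // mulrAC ler_pdivrMr //; nra.
Qed.

Lemma geom_hr_le_surv q p : is_pmf q -> 0 < p <= 1 -> hr_le (geom_pmf p) q ->
  forall j, q j <= p * surv q j.
Proof.
move=> Hq p01 hr j; have := hr j; rewrite hazard_geom // hazardE // (survS q j).
have /andP[p0 p1] := p01; have q0 := Hq.1 j; have s0 := surv_ge0 q j.+1 Hq.
have [->|p_neq1] := eqVneq p 1; first by rewrite mul1r lerDl.
have [->|s_neq0] := eqVneq (surv q j.+1) 0; first by rewrite leye_eq.
have s_gt0 : 0 < surv q j.+1 by rewrite lt_neqAle eq_sym s_neq0.
have p_lt1 : 0 < 1 - p by rewrite subr_gt0 lt_neqAle p_neq1.
by rewrite lee_fin ler_pdivlMr // mulrAC ler_pdivrMr //; nra.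
Qed.

Lemma surv_le_geom q p : p <= 1 -> (forall j, p * surv q j <= q j) ->
  forall j, surv q j <= (1 - p) ^+ j.
Proof.
move=> p1 le_q; elim=> [|j IH]; first by rewrite /surv big_ord0 subr0 expr0.
by have := survS q j; have := le_q j; rewrite exprS; nra.
Qed.

Lemma geom_le_surv q p : p <= 1 -> (forall j, q j <= p * surv q j) ->
  forall j, (1 - p) ^+ j <= surv q j.
Proof.
move=> p1 le_q; elim=> [|j IH]; first by rewrite /surv big_ord0 subr0 expr0.
by have := survS q j; have := le_q j; rewrite exprS; nra.
Qed.

Lemma expect_survE q : is_pmf q ->
  (1 + expect q = \esum_(j in [set: nat]) (surv q j)%:E)%E.
Proof.
move=> Hq; have q0 := Hq.1.
transitivity (\esum_(k in [set: nat]) (k.+1%:R * q k)%:E)%E.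
  rewrite -Hq.2 /expect -esumD => [|k _|k _]; rewrite ?lee_fin ?mulr_ge0 //.
  by apply: eq_esum => k _; rewrite -EFinD -addn1 natrD mulrDl mul1r addrC.
have surv_esum j :
    (surv q j)%:E = (\esum_(k in [set k | (j <= k)%N]) (q k)%:E)%E.
  by rewrite -prob_geqE.
have mass_esum k : (k.+1%:R * q k)%:E = (\esum_(j in `I_k.+1) (q k)%:E)%E.
  by rewrite (esum_ltn (fun=> q k)) // sumr_const card_ord mulr_natl.
rewrite (eq_esum (fun j _ => surv_esum j)) (eq_esum (fun k _ => mass_esum k)).
rewrite !esum_esum => [|*|*]; rewrite ?lee_fin //.
rewrite (reindex_esum ([set: nat] `*`` (fun j => [set k | (j <= k)%N])) _
  (fun x : nat * nat => (x.2, x.1))) //; split=> /=.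
- by move=> [i j] [_ /= h].
- by move=> [i1 i2] [j1 j2] /= _ _ [] -> ->.
- by move=> [i j] [_ /= h]; exists (j, i).
Qed.

Lemma prob_le_esumD q1 q2 (c : nat -> R) A :
  (forall k, 0 <= q1 k) -> (forall k, 0 <= c k) ->
  (forall k, q2 k <= q1 k + c k) ->
  (prob q2 A <= prob q1 A + \esum_(k in [set: nat]) (c k)%:E)%E.
Proof.
move=> q10 c0 le_q; rewrite /prob.
apply: (@le_trans _ _ (\esum_(k in A) ((q1 k)%:E + (c k)%:E))%E).
  by apply: le_esum => k _; rewrite -EFinD lee_fin.
rewrite esumD => [|k _|k _]; rewrite ?lee_fin //; apply: leeD2l.
rewrite [leRHS](esumID A) => [|k _]; rewrite ?lee_fin // setTI leeDl //.
by apply: esum_ge0 => k _; rewrite lee_fin.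
Qed.

Lemma dTV_le_esum q1 q2 (c : nat -> R) : is_pmf q1 -> is_pmf q2 ->
  (forall k, 0 <= c k) -> (forall k, q2 k <= q1 k + c k) ->
  (dTV q1 q2 <= \esum_(k in [set: nat]) (c k)%:E)%E.
Proof.
move=> Hq1 Hq2 c0 le_q; apply: ge_ereal_sup => _ [A _ <-].
have := prob_le_esumD q1 q2 c A Hq1.1 c0 le_q.
have := prob_le_esumD q1 q2 c (~` A) Hq1.1 c0 le_q.
have : (0 <= \esum_(k in [set: nat]) (c k)%:E)%E.
  by apply: esum_ge0 => k _; rewrite lee_fin.
rewrite !prob_setCE // -[prob q1 A](fineK (prob_fin_num q1 A Hq1)).
rewrite -[prob q2 A](fineK (prob_fin_num q2 A Hq2)) /=.
move: (fine (prob q1 A)) (fine (prob q2 A)) => x y.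
move: (\esum_(k in _) _) => [d||] //; last by move=> *; rewrite leey.
rewrite -!EFinD !lee_fin => _ h1 h2.
by rewrite ler_norml; apply/andP; split; lra.
Qed.

Lemma dTVC q1 q2 : dTV q1 q2 = dTV q2 q1.
Proof.
rewrite /dTV; congr ereal_sup.
by apply/seteqP; split => _ [A _ <-]; exists A => //; rewrite abseBC.
Qed.

Lemma esum_absB (x y : nat -> R) : (forall k, 0 <= x k) -> (forall k, 0 <= y k) ->
  \esum_(k in [set: nat]) (x k)%:E \is a fin_num ->
  (forall k, x k <= y k) \/ (forall k, y k <= x k) ->
  (`|\esum_(k in [set: nat]) (x k)%:E - \esum_(k in [set: nat]) (y k)%:E| =
   \esum_(k in [set: nat]) `|x k - y k|%:E)%E.
Proof.
move=> x0 y0 x_fin le_xy.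
have d0 : (0 <= \esum_(k in [set: nat]) `|x k - y k|%:E)%E.
  by apply: esum_ge0 => k _; rewrite lee_fin.
case: le_xy => le_xy.
- have -> : \esum_(k in [set: nat]) (y k)%:E =
      (\esum_(k in [set: nat]) (x k)%:E + \esum_(k in [set: nat]) `|x k - y k|%:E)%E.
    rewrite -esumD => [|k _|k _]; rewrite ?lee_fin //; apply: eq_esum => k _.
    by rewrite -EFinD distrC ger0_norm ?subr_ge0 // addrC subrK.
  move: x_fin d0; set X := \esum_(k in _) (x k)%:E; set D := \esum_(k in _) _.
  case: X => [s _||] //; case: D => [d d0||] //=.
  by rewrite opprD addrA subrr add0r normrN ger0_norm.
- have Ex : \esum_(k in [set: nat]) (x k)%:E =
      (\esum_(k in [set: nat]) (y k)%:E + \esum_(k in [set: nat]) `|x k - y k|%:E)%E.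
    rewrite -esumD => [|k _|k _]; rewrite ?lee_fin //; apply: eq_esum => k _.
    by rewrite -EFinD ger0_norm ?subr_ge0 // addrC subrK.
  have y_ge0 : (0 <= \esum_(k in [set: nat]) (y k)%:E)%E.
    by apply: esum_ge0 => k _; rewrite lee_fin.
  rewrite Ex in x_fin *; move: x_fin y_ge0 d0.
  set Y := \esum_(k in _) (y k)%:E; set D := \esum_(k in _) _.
  case: Y => [s||] //; case: D => [d||] //= _ _ d0.
  by rewrite addrAC subrr add0r ger0_norm.
Qed.

Lemma dTV_le_common_bound q1 q2 (y : nat -> R) : is_pmf q1 -> is_pmf q2 ->
  (forall k, 0 <= y k) ->
  (forall k, y k <= q1 k /\ y k <= q2 k) \/ (forall k, q1 k <= y k /\ q2 k <= y k) ->
  (dTV q1 q2 <= `|1 - \esum_(k in [set: nat]) (y k)%:E|)%E.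
Proof.
move=> Hq1 Hq2 y0 hy.
have q2_fin : \esum_(k in [set: nat]) (q2 k)%:E \is a fin_num by rewrite Hq2.2.
have cmp : (forall k, q2 k <= y k) \/ (forall k, y k <= q2 k).
  by case: hy => h; [right|left] => k; case: (h k).
rewrite -Hq2.2 (esum_absB _ _ Hq2.1 y0 q2_fin cmp); case: hy => h.
- apply: dTV_le_esum => // k; have [h1 h2] := h k.
  by have := ler_norm (q2 k - y k); lra.
- rewrite dTVC; apply: dTV_le_esum => // k; have [h1 h2] := h k.
  by have := ler_norm (y k - q2 k); rewrite distrC; lra.
Qed.

End pmf_nat.

Theorem theorem5p2 (R : realType) (qW : nat -> R) :
  is_pmf qW ->
  0 < qW 0%N ->
  hr_le qW (geom_pmf (qW 0%N)) \/ hr_le (geom_pmf (qW 0%N)) qW ->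
  (dTV qW (geom_pmf (qW 0%N))
     <= `| 1 - (qW 0%N)%:E * (1 + expect qW) |)%E.
Proof.
move=> Hq p_gt0 hr; set p := qW 0%N in p_gt0 hr *.
have p01 : 0 < p <= 1 by rewrite p_gt0 pmf_le1.
rewrite expect_survE // esumZl => [||k]; [|exact: ltW|exact: surv_ge0].
apply: dTV_le_common_bound => [//||k|]; first exact: is_pmf_geom.
  exact: mulr_ge0 (ltW p_gt0) (surv_ge0 _ k Hq).
case: hr => [/(hr_le_geom_surv _ _ Hq p01)|/(geom_hr_le_surv _ _ Hq p01)] le_q.
- left=> k; split; first exact: le_q.
  by rewrite /geom_pmf ler_pM2l // surv_le_geom // (andP p01).2.
- right=> k; split; first exact: le_q.
  by rewrite /geom_pmf ler_pM2l // geom_le_surv // (andP p01).2.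
Qed.
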